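(* Let $\mathbf a=(a_0,a_1,a_2,\dots)$ be a sequence of natural numbers with $a_j>1$, and assume the $\mathbf a$-adic solenoid $\Sigma_{\mathbf a}$ contains an element of order $2$. Let $\alpha$ be a random variable with a Bernoulli distribution taking the values $0$ and $1$ with probability $\frac12$ each. Then there exist independent identically distributed random variables $\xi_1,\xi_2,\xi_3$ with values in $\Sigma_{\mathbf a}$ and a symmetric distribution $\mu$ with nowhere vanishing characteristic function, such that $\alpha$ is independent of $(\xi_1,\xi_2,\xi_3)$, the linear forms $2\xi_1$ and $\xi_1+\xi_2+2\alpha\xi_3$ are identically distributed, and $\mu$ cannot be represented as $\mu=\tau(M)$ with $\tau:\mathbb R\to\Sigma_{\mathbf a}$ a continuous monomorphism and $M$ a hyperbolic secant distribution on $\mathbb R$.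
   Context: The $\mathbf a$-adic solenoid: let $\Delta_{\mathbf a}$ be the compact group of $\mathbf a$-adic integers (as a set $\prod_{n\ge0}\{0,1,\dots,a_n-1\}$, with addition with carries determined by $\mathbf a$), let $u=(1,0,0,\dots)\in\Delta_{\mathbf a}$, and let $B=\{(n,nu):n\in\mathbb Z\}$; then $\Sigma_{\mathbf a}=(\mathbb R\times\Delta_{\mathbf a})/B$, a compact connected Abelian group with character group $H_{\mathbf a}=\{m/(a_0\cdots a_n): n\ge0, m\in\mathbb Z\}$. The characteristic function of $\mu$ is $\hat\mu(y)=\int (x,y)\,d\mu(x)$, $y\in H_{\mathbf a}$. A distribution is symmetric if $\mu(B)=\mu(-B)$ for all Borel $B$. A hyperbolic secant distribution on $\mathbb R$ is one with characteristic function $\frac{2}{e^{\sigma s}+e^{-\sigma s}}$ for some real $\sigma$ ($\sigma=0$ allowed). $\tau(M)(E)=M(\tau^{-1}(E))$. *)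

From HB Require Import structures.
From mathcomp Require Import all_boot all_order all_algebra.
From mathcomp Require Import all_classical all_reals all_analysis.

Set Implicit Arguments.
Unset Strict Implicit.
Unset Printing Implicit Defensive.

Import Order.TTheory GRing.Theory Num.Theory.
Import numFieldNormedType.Exports.

Local Open Scope classical_set_scope.
Local Open Scope ring_scope.

Record aseq := ASeq { aval :> nat -> nat ; aval_gt1 : forall n, (1 < aval n)%N }.

Section Solenoid.
Variables (R : realType) (a : aseq).

(* An element of Delta_a is a digit sequence d with 0 <= d n < a n.      *)
Definition validD (d : nat -> nat) : Prop := forall n, (d n < a n)%N.

Fixpoint carry (x y : nat -> nat) (n : nat) : nat :=
  match n with
  | 0 => 0
  | k.+1 => ((x k + y k + carry x y k) %/ a k)%N
  end.

Definition dadd (x y : nat -> nat) : nat -> nat :=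
  fun n => ((x n + y n + carry x y n) %% a n)%N.

Definition dzero : nat -> nat := fun _ => 0%N.

Definition du : nat -> nat := fun n => if n == 0%N then 1%N else 0%N.

Definition dnat (k : nat) : nat -> nat := iter k (dadd du) dzero.

Lemma dadd_valid x y : validD (dadd x y).
Proof. by move=> n; rewrite /dadd ltn_pmod // (ltn_trans _ (aval_gt1 a n)). Qed.

Lemma dzero_valid : validD dzero.
Proof. by move=> n; rewrite /dzero (ltn_trans _ (aval_gt1 a n)). Qed.

Definition pt := (R * (nat -> nat))%type.

Definition padd (p q : pt) : pt := (p.1 + q.1, dadd p.2 q.2).

Definition bvec (k : nat) : pt := ((k%:R : R), dnat k).

(* p - q lies in B  <->  p + (m, m u) = q + (k, k u) for some m, k : nat *)
Definition Brel (p q : pt) : Prop :=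
  exists m k : nat, padd p (bvec m) = padd q (bvec k).

Definition cls (p : pt) : set pt := [set q | validD q.2 /\ Brel p q].

Definition Sig : Type := {S : set pt | exists p : pt, validD p.2 /\ S = cls p}.

HB.instance Definition _ := gen_eqMixin Sig.
HB.instance Definition _ := gen_choiceMixin Sig.

Definition mkS (p : pt) (hp : validD p.2) : Sig :=
  exist _ (cls p) (ex_intro _ p (conj hp erefl)).

Definition repS (x : Sig) : pt := proj1_sig (cid (proj2_sig x)).

Definition Szero : Sig := @mkS ((0 : R), dzero) dzero_valid.

HB.instance Definition _ := isPointed.Build Sig Szero.

Definition Sadd (x y : Sig) : Sig :=
  @mkS (padd (repS x) (repS y)) (dadd_valid (repS x).2 (repS y).2).

Definition Snmul (k : nat) (x : Sig) : Sig := iter k (Sadd x) Szero.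

Definition Sopp_set (E : set Sig) : set Sig :=
  [set x | exists b, E b /\ Sadd x b = Szero].

(* product topology of R x prod_n {0,...,a_n - 1}, restricted to R x Delta_a *)
Definition open_pt (U : set pt) : Prop :=
  forall p, U p -> validD p.2 ->
    exists e : R, 0 < e /\ exists N : nat, forall q : pt, validD q.2 ->
      `|q.1 - p.1| < e -> (forall i, (i < N)%N -> q.2 i = p.2 i) -> U q.

Definition Sopen (V : set Sig) : Prop :=
  open_pt [set p | exists hp : validD p.2, V (mkS hp)].

Definition SigB := g_sigma_algebraType Sopen.

Definition Pn (n : nat) : nat := (\prod_(i < n.+1) a i)%N.
Definition Nn (n : nat) (d : nat -> nat) : nat :=
  (\sum_(i < n.+1) d i * \prod_(j < i) a j)%N.

(* the character of Sigma_a corresponding to y = m / (a_0 ... a_n) in H_a: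
   (x, y) = exp (2 pi i * phase n m x) *)
Definition phase (n : nat) (m : int) (x : Sig) : R :=
  let p := repS x in
  m%:~R * (p.1 - (Nn n p.2)%:R) / (Pn n)%:R.

Definition charRe (mu : probability SigB R) (n : nat) (m : int) : \bar R :=
  (\int[mu]_x (cos (2 * pi * phase n m x))%:E)%E.
Definition charIm (mu : probability SigB R) (n : nat) (m : int) : \bar R :=
  (\int[mu]_x (sin (2 * pi * phase n m x))%:E)%E.

Definition nowhere_vanishing_char (mu : probability SigB R) : Prop :=
  forall (n : nat) (m : int), ~ (charRe mu n m = 0%E /\ charIm mu n m = 0%E).

Definition symmetric_distr (mu : probability SigB R) : Prop :=
  forall E : set SigB, measurable E -> mu E = mu (Sopp_set E).

Definition hyperbolic_secant (M : probability R R) : Prop :=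
  exists sigma : R, forall s : R,
    (\int[M]_x (cos (s * x))%:E)%E = (2 / (expR (sigma * s) + expR (- (sigma * s))))%:E
    /\ (\int[M]_x (sin (s * x))%:E)%E = 0%E.

Definition continuous_monomorphism (tau : R -> Sig) : Prop :=
  (forall s t, tau (s + t) = Sadd (tau s) (tau t)) /\ injective tau /\
  (forall V : set Sig, Sopen V -> open (tau @^-1` V)).

Definition image_distr (tau : R -> Sig) (M : probability R R) (mu : probability SigB R) :
  Prop := forall E : set SigB, measurable E -> mu E = M (tau @^-1` E).

End Solenoid.

(* Take the point mass [mu] at an element [x0] of order 2, [xi1 = xi2 = xi3 = x0] and
   an independent fair coin [alpha].  Both linear forms are then identically 0, [mu]
   is symmetric because [-x0 = x0], and its characteristic function has modulus 1.
   An injective additive [tau : R -> Sigma_a] never takes a value of order 2, so every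
   image measure [tau(M)] gives [{x0}] mass 0 while [mu] gives it mass 1.  The real
   work is the measurability of [{x0}], i.e. that points are closed in the quotient
   topology: two points of [R x Delta_a] lie in the same [B]-coset iff their real
   parts differ by an integer [k - m] and, for every [n], their truncated expansions
   [N_n] satisfy [N_n(d) + m = N_n(d') + k mod P_n]. *)

From Pilot Require Import Defs.
From HB Require Import structures.
From mathcomp Require Import all_boot all_order all_algebra.
From mathcomp Require Import all_classical all_reals all_analysis.
From mathcomp Require Import zify lra.
(* [derive.v] also exports a [dadd]; re-importing gives [Defs.dadd] priority. *)
Import Defs.

Set Implicit Arguments.
Unset Strict Implicit.

Import Order.TTheory GRing.Theory Num.Theory.
Import numFieldNormedType.Exports.

Local Open Scope classical_set_scope.
Local Open Scope ring_scope.

Section Digits.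
Variable a : aseq.

Lemma aseq_gt0 n : (0 < a n)%N.
Proof. exact: ltn_trans (aval_gt1 a n). Qed.

Lemma Nn0 d : Nn a 0 d = d 0%N.
Proof. by rewrite /Nn big_ord1 big_ord0 muln1. Qed.

Lemma NnS n d : Nn a n.+1 d = (Nn a n d + d n.+1 * Pn a n)%N.
Proof. by rewrite /Nn big_ord_recr. Qed.

Lemma PnS n : Pn a n.+1 = (Pn a n * a n.+1)%N.
Proof. by rewrite /Pn big_ord_recr. Qed.

Lemma Pn_gt0 n : (0 < Pn a n)%N.
Proof. by rewrite prodn_gt0 // => i; exact: aseq_gt0. Qed.

Lemma Nn_lt_Pn d n : validD a d -> (Nn a n d < Pn a n)%N.
Proof.
move=> vd; elim: n => [|n IH]; first by rewrite Nn0 /Pn big_ord1.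
rewrite NnS PnS; have := vd n.+1; nia.
Qed.

Lemma Nn_dadd_carry x y n :
  (Nn a n x + Nn a n y = Nn a n (dadd a x y) + carry a x y n.+1 * Pn a n)%N.
Proof.
elim: n => [|n IH].
  by rewrite !Nn0 /Pn big_ord1 /dadd /= addn0 [RHS]addnC -divn_eq.
rewrite !NnS PnS.
set s := (x n.+1 + y n.+1 + carry a x y n.+1)%N.
have -> : dadd a x y n.+1 = (s %% a n.+1)%N by [].
have -> : carry a x y n.+2 = (s %/ a n.+1)%N by [].
have := divn_eq s (a n.+1); move: (s %/ _)%N (s %% _)%N => q r.
rewrite /s; nia.
Qed.

Lemma Nn_dadd x y n : Nn a n (dadd a x y) = ((Nn a n x + Nn a n y) %% Pn a n)%N.
Proof.
by rewrite Nn_dadd_carry addnC modnMDl modn_small //; exact/Nn_lt_Pn/dadd_valid.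
Qed.

Lemma Nn_dzero n : Nn a n dzero = 0%N.
Proof. by rewrite /Nn big1. Qed.

Lemma Nn_du n : Nn a n du = 1%N.
Proof. by elim: n => [|n IH]; rewrite ?Nn0 // NnS IH. Qed.

Lemma Nn_dnat k n : Nn a n (dnat a k) = (k %% Pn a n)%N.
Proof.
elim: k => [|k IH]; first by rewrite mod0n Nn_dzero.
by rewrite /dnat iterS -/(dnat a k) Nn_dadd IH Nn_du modnDmr add1n.
Qed.

Lemma eq_digits x y : validD a x -> validD a y ->
  (forall n, Nn a n x = Nn a n y) -> x = y.
Proof.
move=> vx vy eqN; apply: funext => -[|n]; first by have := eqN 0%N; rewrite !Nn0.
have := eqN n.+1; rewrite !NnS eqN => /addnI /eqP.
by rewrite eqn_pmul2r ?Pn_gt0 // => /eqP.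
Qed.

Lemma daddC x y : dadd a x y = dadd a y x.
Proof. by apply: eq_digits; try exact: dadd_valid; move=> n; rewrite !Nn_dadd addnC. Qed.

Lemma daddA x y z : dadd a x (dadd a y z) = dadd a (dadd a x y) z.
Proof.
apply: eq_digits; try exact: dadd_valid.
by move=> n; rewrite !Nn_dadd modnDmr modnDml addnA.
Qed.

Lemma dadd0 x : validD a x -> dadd a x dzero = x.
Proof.
move=> vx; apply: eq_digits => //; first exact: dadd_valid.
by move=> n; rewrite Nn_dadd Nn_dzero addn0 modn_small // Nn_lt_Pn.
Qed.

Lemma dadd_inj x y z : validD a y -> validD a z -> dadd a x y = dadd a x z -> y = z.
Proof.
move=> vy vz e; apply: eq_digits => // n.
have /eqP := congr1 (Nn a n) e; rewrite !Nn_dadd eqn_modDl.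
by rewrite !modn_small ?Nn_lt_Pn // => /eqP.
Qed.

Lemma dnatD m k : dadd a (dnat a m) (dnat a k) = dnat a (m + k).
Proof.
apply: eq_digits; try exact: dadd_valid.
  by case: (m + k)%N => [|j]; [exact: dzero_valid | exact: dadd_valid].
by move=> n; rewrite Nn_dadd !Nn_dnat modnDm.
Qed.

End Digits.

Section Cosets.
Variables (R : realType) (a : aseq).
Implicit Types p q r : pt R.

Lemma paddC : commutative (@padd R a).
Proof. by move=> p q; rewrite /padd addrC daddC. Qed.

Lemma paddA : associative (@padd R a).
Proof. by move=> p q r; rewrite /padd /= addrA daddA. Qed.

Lemma paddACA : interchange (@padd R a) (@padd R a).
Proof. by move=> p q r s; rewrite -!paddA (paddA q) (paddC q r) -paddA. Qed.

Lemma padd0 p : validD a p.2 -> padd a p (0, dzero) = p.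
Proof. by case: p => x d vd; rewrite /padd /= addr0 dadd0. Qed.

Lemma padd_inj p q r : validD a q.2 -> validD a r.2 -> padd a p q = padd a p r -> q = r.
Proof. by case: q r => [x d] [y e] /= vd ve [/addrI -> /dadd_inj ->]. Qed.

Lemma bvecD m k : padd a (bvec R a m) (bvec R a k) = bvec R a (m + k).
Proof. by rewrite /padd /bvec /= natrD dnatD. Qed.

Lemma Brel_refl p : Brel a p p.
Proof. by exists 0%N, 0%N. Qed.

Lemma Brel_sym p q : Brel a p q -> Brel a q p.
Proof. by move=> [m [k e]]; exists k, m. Qed.

Lemma BrelD p p' q q' : Brel a p p' -> Brel a q q' -> Brel a (padd a p q) (padd a p' q').
Proof.
move=> [m1 [k1 e1]] [m2 [k2 e2]]; exists (m1 + m2)%N, (k1 + k2)%N.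
by rewrite -!bvecD paddACA [RHS]paddACA e1 e2.
Qed.

Lemma Brel_padd2l p q r : Brel a (padd a p q) (padd a p r) -> Brel a q r.
Proof.
move=> [m [k e]]; exists m, k; apply: (@padd_inj p); try exact: dadd_valid.
by rewrite !paddA.
Qed.

Lemma Brel_trans p q r : Brel a p q -> Brel a q r -> Brel a p r.
Proof.
move=> epq eqr; apply: (@Brel_padd2l q).
by rewrite (paddC q r); apply: BrelD.
Qed.

Lemma BrelE p q : Brel a p q <-> exists m k : nat, p.1 + m%:R = q.1 + k%:R /\
  forall n, (Nn a n p.2 + m = Nn a n q.2 + k %[mod Pn a n])%N.
Proof.
split=> -[m [k e]]; exists m, k.
  split; first by have := congr1 fst e.
  by move=> n; have := congr1 (fun p => Nn a n p.2) e; rewrite /= !Nn_dadd !Nn_dnat !modnDmr.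
case: e => e1 e2; rewrite /padd /bvec /=; congr pair => //.
by apply: eq_digits; try exact: dadd_valid; move=> n; rewrite !Nn_dadd !Nn_dnat !modnDmr.
Qed.

End Cosets.

Section SolenoidGroup.
Variables (R : realType) (a : aseq).
Implicit Types (p q : pt R) (x y : Sig R a).

Lemma repS_spec x : validD a (repS x).2 /\ proj1_sig x = cls a (repS x).
Proof. by rewrite /repS; case: cid => p []. Qed.

Lemma Brel_cls p q : Brel a p q -> cls a p = cls a q.
Proof.
move=> epq; apply/seteqP; split=> r [vr epr]; split=> //.
  exact: Brel_trans (Brel_sym epq) epr.
exact: Brel_trans epq epr.
Qed.

Lemma Sig_ext x y : Brel a (repS x) (repS y) -> x = y.
Proof.
move=> /Brel_cls e.
have : proj1_sig x = proj1_sig y by rewrite (proj2 (repS_spec x)) (proj2 (repS_spec y)) e.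
by case: x y {e} => [X hX] [Y hY] /= eXY; subst Y; congr exist; exact: Prop_irrelevance.
Qed.

Lemma Brel_repS_mkS p (hp : validD a p.2) : Brel a p (repS (mkS hp)).
Proof.
have [vr e] := repS_spec (mkS hp).
have : proj1_sig (mkS hp) (repS (mkS hp)) by rewrite e; split=> //; exact: Brel_refl.
by case.
Qed.

Lemma mkS_eq p (hp : validD a p.2) x : mkS hp = x <-> Brel a p (repS x).
Proof.
split=> [<-|epx]; first exact: Brel_repS_mkS.
by apply: Sig_ext; apply: Brel_trans (Brel_sym (Brel_repS_mkS hp)) epx.
Qed.

Lemma Brel_repS_Sadd x y : Brel a (padd a (repS x) (repS y)) (repS (Sadd x y)).
Proof. exact: Brel_repS_mkS. Qed.

Lemma Sadd0 x : Sadd x (Szero R a) = x.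
Proof.
apply: Sig_ext; apply: Brel_trans (Brel_sym (Brel_repS_Sadd _ _)) _.
rewrite -[X in Brel _ _ X](@padd0 _ a); last by case: (repS_spec x).
by apply: BrelD; [exact: Brel_refl | exact: Brel_sym (Brel_repS_mkS _)].
Qed.

Lemma SaddI x : injective (Sadd x).
Proof.
move=> y z e; apply: Sig_ext; apply: (@Brel_padd2l _ _ (repS x)).
have := Brel_repS_Sadd x y; rewrite e => /Brel_trans; apply.
exact: Brel_sym (Brel_repS_Sadd _ _).
Qed.

End SolenoidGroup.

Lemma int_gap (R : realType) (t : R) : (forall z : int, t != z%:~R) ->
  exists2 e : R, 0 < e & forall z : int, e <= `|t - z%:~R|.
Proof.
move=> tZ; set z0 := Num.floor t.
have lb : z0%:~R < t by rewrite lt_neqAle eq_sym tZ floor_le.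
have ub : t < z0%:~R + 1 by rewrite -[1]/(1%:~R) -intrD -floor_lt_int ltzD1.
exists (Num.min (t - z0%:~R) (z0%:~R + 1 - t)) => [|z]; first by rewrite lt_min !subr_gt0 lb ub.
rewrite ge_min; case: (leP z z0) => hz; apply/orP; [left | right].
  have : z%:~R <= z0%:~R :> R by rewrite ler_int.
  by move=> hzR; rewrite ger0_norm; lra.
have : (z0 + 1)%:~R <= z%:~R :> R by rewrite ler_int; lia.
by rewrite intrD => hzR; rewrite ltr0_norm; lra.
Qed.

Lemma nat_eq_of_dist_lt1 (R : realType) (i j : nat) : `|i%:R - j%:R : R| < 1 -> i = j.
Proof.
rewrite ltr_norml => /andP [h1 h2].
case: (ltngtP i j) => // [ij|ji]; exfalso.
  have : i%:R + 1 <= j%:R :> R by rewrite natr1 ler_nat.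
  lra.
have : j%:R + 1 <= i%:R :> R by rewrite natr1 ler_nat.
lra.
Qed.

Section Topology.
Variables (R : realType) (a : aseq).
Implicit Types p q r : pt R.

Definition pt_nbhs p (U : set (pt R)) : Prop :=
  exists e : R, 0 < e /\ exists N : nat, forall q, validD a q.2 ->
    `|q.1 - p.1| < e -> (forall i, (i < N)%N -> q.2 i = p.2 i) -> U q.

Lemma not_Brel_nbhs_real p r : (forall m k : nat, p.1 + m%:R != r.1 + k%:R) ->
  pt_nbhs p [set q | ~ Brel a q r].
Proof.
move=> hpr; have [e e_gt0 gap] : exists2 e : R, 0 < e &
    forall z : int, e <= `|r.1 - p.1 - z%:~R|.
  apply: int_gap => -[n|n]; apply/negP => /eqP e.
    by have /eqP := hpr n 0%N; apply; move: e; rewrite -pmulrn; lra.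
  by have /eqP := hpr 0%N n.+1; apply; move: e; rewrite NegzE mulrNz -pmulrn; lra.
exists e; split=> //; exists 0%N => q _ hq _ /BrelE [m [k [e1 _]]].
have := gap (m%:Z - k%:Z); rewrite intrB -!pmulrn.
have -> : r.1 - p.1 - (m%:R - k%:R) = q.1 - p.1 by lra.
by rewrite leNgt hq.
Qed.

Lemma not_Brel_nbhs_digits p r m0 k0 : p.1 + m0%:R = r.1 + k0%:R -> ~ Brel a p r ->
  pt_nbhs p [set q | ~ Brel a q r].
Proof.
move=> e0 npr.
have [n0 hn0] : exists n0, ~ (Nn a n0 p.2 + m0 = Nn a n0 r.2 + k0 %[mod Pn a n0])%N.
  by apply/existsNP => congr_all; apply/npr/BrelE; exists m0, k0.
exists (1 / 2); split; first lra.
exists n0.+1 => q _ hq hdig /BrelE [m [k [e1 /(_ n0) e2]]]; apply: hn0.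
have ekm : (k + m0 = m + k0)%N.
  apply: (@nat_eq_of_dist_lt1 R); rewrite !natrD.
  have -> : k%:R + m0%:R - (m%:R + k0%:R) = q.1 - p.1 by lra.
  by apply: lt_trans hq _; lra.
have hN : Nn a n0 q.2 = Nn a n0 p.2 by apply: eq_bigr => i _; rewrite hdig.
apply/eqP; rewrite -(eqn_modDl k); apply/eqP.
have -> : (k + (Nn a n0 p.2 + m0) = Nn a n0 q.2 + m + k0)%N by rewrite hN; lia.
have -> : (k + (Nn a n0 r.2 + k0) = Nn a n0 r.2 + k + k0)%N by lia.
by rewrite -modnDml e2 modnDml.
Qed.

(* Either [r.1 - p.1] is not an integer, which a real neighbourhood of [p] detects,
   or it is and some digit congruence fails, which finitely many digits detect. *)
Lemma open_not_Brel r : open_pt a [set p | ~ Brel a p r].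
Proof.
move=> p npr _.
case: (pselect (exists m0 k0 : nat, p.1 + m0%:R = r.1 + k0%:R)) => [[m0 [k0 e0]] | hreal].
  exact: not_Brel_nbhs_digits e0 npr.
by apply: not_Brel_nbhs_real => m k; apply/eqP => e; apply: hreal; exists m, k.
Qed.

Lemma Sopen_setC1 (x : Sig R a) : Sopen (~` [set x]).
Proof.
move=> p [hp /= npx] vp.
have [e [e_gt0 [N nbhsN]]] := open_not_Brel (npx \o (mkS_eq hp x).2) vp.
by exists e; split=> //; exists N => q vq hq hdig; exists vq => /mkS_eq; apply: nbhsN.
Qed.

Lemma measurable_set1 (x : SigB R a) : measurable [set x].
Proof.
rewrite -[X in measurable X]setCK; apply: measurableC.
by apply: sub_sigma_algebra; exact: Sopen_setC1.
Qed.

End Topology.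

Section DiracIntegral.
Local Open Scope ereal_scope.
Import HBNNSimple.
Variables (d : measure_display) (T : measurableType d) (R : realType) (x0 : T).
Hypothesis mx0 : measurable [set x0].

(* Unlike [integral_dirac], the integrand need not be measurable: it suffices that
   the singleton is. *)
Lemma integral_dirac_set1_ge0 (g : T -> R) : (forall x, 0 <= g x)%R ->
  \int[\d_x0]_x (g x)%:E = (g x0)%:E.
Proof.
move=> g_ge0; rewrite ge0_integralTE; last by move=> x; rewrite lee_fin.
have int_nnsfun (h : {nnsfun T >-> R}) : \int[\d_x0]_x (h x)%:E = (h x0)%:E.
  rewrite integral_dirac ?diracE ?in_setT ?mul1e //.
  exact/measurable_realfun.measurable_EFinP/measurable_funPT.
apply/eqP; rewrite eq_le; apply/andP; split.
  by apply: ge_ereal_sup => _ [h hg <-]; rewrite -integralT_nnsfun int_nnsfun; exact: hg.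
apply: ereal_sup_ubound; exists (scale_nnsfun (indic_nnsfun R mx0) (g_ge0 x0)).
  move=> x /=; rewrite /measurable_realfun.mindic indicE; have [->|nx] := pselect (x = x0).
    by rewrite mem_set // mulr1.
  by rewrite memNset // mulr0 lee_fin.
by rewrite -integralT_nnsfun int_nnsfun /= /measurable_realfun.mindic indicE mem_set // mulr1.
Qed.

Lemma integral_dirac_set1 (f : T -> R) : \int[\d_x0]_x (f x)%:E = (f x0)%:E.
Proof.
rewrite integralE.
under eq_integral do rewrite funeposE /= -EFin_max.
under [X in _ - X]eq_integral do rewrite funenegE /= -EFin_max.
rewrite !integral_dirac_set1_ge0 => [|x|x]; rewrite ?le_max ?lexx ?orbT //.
rewrite -EFinB; congr EFin; have [f_ge0|f_lt0] := leP 0%R (f x0).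
  by rewrite (max_idPr _) ?subr0 // oppr_le0.
by rewrite (max_idPl _) ?sub0r ?opprK // oppr_ge0 ltW.
Qed.

End DiracIntegral.

Section OrderTwo.
Variables (R : realType) (a : aseq).
Implicit Types x : Sig R a.

Lemma Snmul2 x : Snmul 2 x = Sadd x x.
Proof. by rewrite /Snmul /= Sadd0. Qed.

Lemma Snmul_double_order2 x (b : bool) : Sadd x x = Szero R a -> Snmul (2 * b) x = Szero R a.
Proof. by case: b => x2 //; rewrite muln1 Snmul2. Qed.

Lemma additive_Sig0 (tau : R -> Sig R a) :
  (forall s t, tau (s + t) = Sadd (tau s) (tau t)) -> tau 0 = Szero R a.
Proof. by move=> tauD; apply: (@SaddI _ _ (tau 0)); rewrite -tauD addr0 Sadd0. Qed.

Lemma Sopp_set_order2 (E : set (Sig R a)) x : Sadd x x = Szero R a ->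
  Sopp_set E x <-> E x.
Proof.
move=> x2; split=> [[y [Ey]]|Ex]; last by exists x.
by rewrite -x2 => /SaddI <-.
Qed.

Lemma monomorphism_preimage_order2 (tau : R -> Sig R a) x :
  (forall s t, tau (s + t) = Sadd (tau s) (tau t)) -> injective tau ->
  x <> Szero R a -> Sadd x x = Szero R a -> tau @^-1` [set x] = set0.
Proof.
move=> tauD tau_inj x_neq0 x2; apply/seteqP; split=> // t /= taut.
have /tau_inj tt0 : tau (t + t) = tau 0 by rewrite tauD taut x2 additive_Sig0.
by apply: x_neq0; rewrite -taut (_ : t = 0) ?additive_Sig0 //; lra.
Qed.

Let dirac_Sig x : probability (SigB R a) R := @dirac _ (SigB R a) x R.

Lemma dirac_symmetric x : Sadd x x = Szero R a -> symmetric_distr (dirac_Sig x).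
Proof.
move=> x2 E _; rewrite [LHS]diracE [RHS]diracE.
have [Ex|nEx] := pselect (E x).
  by rewrite !mem_set //; exact/(Sopp_set_order2 _ x2).
by rewrite !memNset // => /(Sopp_set_order2 _ x2).
Qed.

Lemma dirac_nowhere_vanishing_char x : nowhere_vanishing_char (dirac_Sig x).
Proof.
move=> n m []; rewrite /charRe /charIm !(integral_dirac_set1 (measurable_set1 x)) => -[c0] [s0].
have := cos2Dsin2 (2 * pi * phase n m x); rewrite c0 s0 expr0n /= add0r => /eqP.
by rewrite eq_sym oner_eq0.
Qed.

Lemma dirac_order2_not_image x : x <> Szero R a -> Sadd x x = Szero R a ->
  ~ exists (tau : R -> Sig R a) (M : probability R R), continuous_monomorphism tau /\
    hyperbolic_secant M /\ image_distr tau M (dirac_Sig x).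
Proof.
move=> x_neq0 x2 [tau [M [[tauD [tau_inj _]] [_ img]]]].
have mux : dirac_Sig x [set x] = 1%E by rewrite [LHS]diracE mem_set.
have := img [set x] (measurable_set1 x).
by rewrite mux monomorphism_preimage_order2 // measure0 => /eqP; rewrite eqe oner_eq0.
Qed.

End OrderTwo.

Lemma probability_setI_preimage_cst d (T : measurableType d) (R : realType)
    (P : probability T R) (U : Type) (A : set T) (u : U) (B : set U) :
  P (A `&` cst u @^-1` B) = (P A * P (cst u @^-1` B))%E.
Proof.
rewrite preimage_cst; case: ifP => _.
  by rewrite setIT probability_setT mule1.
by rewrite setI0 measure0 mule0.
Qed.

Lemma probability_preimage_cst d (T : measurableType d) (R : realType)
    (P : probability T R) (U : Type) (u : U) (B : set U) :
  P (cst u @^-1` B) = (u \in B)%:R%:E.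
Proof. by rewrite preimage_cst; case: ifP => _; rewrite ?probability_setT ?measure0. Qed.

Lemma nat_of_bool_measurable : measurable_fun setT nat_of_bool.
Proof. by []. Qed.

HB.instance Definition _ :=
  isMeasurableFun.Build _ _ bool nat nat_of_bool nat_of_bool_measurable.

Lemma preimage_nat_of_bool1 (b : bool) : nat_of_bool @^-1` [set nat_of_bool b] = [set b].
Proof. by apply/seteqP; split=> -[]; case: b. Qed.

Lemma bernoulli_half_set1 (R : realType) (b : bool) :
  bernoulli_prob (1 / 2 : R) [set b] = (1 / 2)%:E.
Proof.
have half01 : 0 <= (1 / 2 : R) <= 1 by apply/andP; split; lra.
rewrite bernoulli_probE // !diracE !in_set1; case: b => /=.
  by rewrite mule0 adde0 mule1.
by rewrite mule0 add0e mule1; congr EFin; rewrite /unstable.onem; lra.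
Qed.

Theorem proposition2p7 (R : realType) (a : aseq) :
  (exists x : Sig R a, x <> Szero R a /\ Sadd x x = Szero R a) ->
  exists (d : measure_display) (T : measurableType d) (P : probability T R)
         (alpha : {mfun T >-> nat}) (xi1 xi2 xi3 : {mfun T >-> SigB R a})
         (mu : probability (SigB R a) R),
    (* alpha is Bernoulli: values 0 and 1 with probability 1/2 each *)
    P (alpha @^-1` [set 0%N]) = (1 / 2 : R)%:E /\
    P (alpha @^-1` [set 1%N]) = (1 / 2 : R)%:E /\
    (* xi1, xi2, xi3 are independent *)
    (forall B1 B2 B3 : set (SigB R a), measurable B1 -> measurable B2 -> measurable B3 ->
       P (xi1 @^-1` B1 `&` xi2 @^-1` B2 `&` xi3 @^-1` B3)
       = (P (xi1 @^-1` B1) * P (xi2 @^-1` B2) * P (xi3 @^-1` B3))%E) /\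
    (* xi1, xi2, xi3 are identically distributed, with distribution mu *)
    (forall B : set (SigB R a), measurable B ->
       P (xi1 @^-1` B) = mu B /\ P (xi2 @^-1` B) = mu B /\ P (xi3 @^-1` B) = mu B) /\
    (* alpha is independent of (xi1, xi2, xi3) *)
    (forall (A : set nat) (C : set (SigB R a * SigB R a * SigB R a)), measurable C ->
       P (alpha @^-1` A `&` [set w | C (xi1 w, xi2 w, xi3 w)])
       = (P (alpha @^-1` A) * P [set w | C (xi1 w, xi2 w, xi3 w)])%E) /\
    (* 2 xi1 and xi1 + xi2 + 2 alpha xi3 are identically distributed *)
    (forall B : set (SigB R a), measurable B ->
       P [set w | B (Snmul 2 (xi1 w))]
       = P [set w | B (Sadd (Sadd (xi1 w) (xi2 w)) (Snmul (2 * alpha w) (xi3 w)))]) /\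
    (* mu is symmetric with nowhere vanishing characteristic function *)
    symmetric_distr mu /\ nowhere_vanishing_char mu /\
    (* mu is not the image of a hyperbolic secant distribution under a
       continuous monomorphism R -> Sigma_a *)
    ~ (exists (tau : R -> Sig R a) (M : probability R R),
         continuous_monomorphism tau /\ hyperbolic_secant M /\ image_distr tau M mu).
Proof.
move=> [x0 [x0_neq0 x0_2]].
pose xi : {mfun bool >-> SigB R a} := cst x0.
exists _, bool, (bernoulli_prob (1 / 2 : R)), nat_of_bool, xi, xi, xi,
  (@dirac _ (SigB R a) x0 R).
split; first by rewrite -(bernoulli_half_set1 R false) -(preimage_nat_of_bool1 false).
split; first by rewrite -(bernoulli_half_set1 R true) -(preimage_nat_of_bool1 true).
split; first by move=> B1 B2 B3 _ _ _; rewrite !probability_setI_preimage_cst.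
split; first by move=> B _; rewrite probability_preimage_cst [RHS]diracE.
split; first by move=> A C _; exact: (probability_setI_preimage_cst _ _ (x0, x0, x0) C).
split.
  move=> B _; congr (_ _); apply/funext => w /=.
  by rewrite Sadd0 x0_2 Snmul_double_order2 // Sadd0.
split; first exact: dirac_symmetric.
split; first exact: dirac_nowhere_vanishing_char.
exact: dirac_order2_not_image.
Qed.
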